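(* If $X$ is a weakly Lindel\''of {\sf P}-space, then $X$ satisfies ${\sf S}_1(\mathcal{G}_K,\mathcal{G}_D)$.
   Context: All spaces are infinite ${\sf T}_1$ topological spaces. A {\sf P}-space is a space in which every intersection of countably many open sets is open. A space is weakly Lindel\''of if every open cover has a countable subfamily whose union is dense. $\mathcal{G}_K$ is the family of all collections $\mathcal{U}$ of ${\sf G}_\delta$ subsets of $X$ with $X\notin\mathcal{U}$ such that each compact subset of $X$ is contained in some member of $\mathcal{U}$. $\mathcal{G}_D$ is the family of collections of ${\sf G}_\delta$ subsets of $X$ whose union is dense in $X$. ${\sf S}_1(\mathcal{A},\mathcal{B})$: for each sequence $(A_n)$ of elements of $\mathcal{A}$ there are $B_n\in A_n$ with $\{B_n:n\in\mathbb{N}\}\in\mathcal{B}$. *)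

From Stdlib Require Import List.
Set Implicit Arguments.

Record topology (X : Type) : Type := Topology {
  open : (X -> Prop) -> Prop;
  open_full : open (fun _ => True);
  open_union : forall F : (X -> Prop) -> Prop,
      (forall U, F U -> open U) -> open (fun x => exists U, F U /\ U x);
  open_inter : forall U V, open U -> open V -> open (fun x => U x /\ V x)
}.

Section Top.
Variables (X : Type) (T : topology X).

Definition T1_space : Prop :=
  forall x y : X, x <> y -> exists U, open T U /\ U x /\ ~ U y.

Definition infinite_space : Prop :=
  ~ exists l : list X, forall x, In x l.

Definition dense (D : X -> Prop) : Prop :=
  forall U, open T U -> (exists x, U x) -> exists x, U x /\ D x.

Definition Gdelta (A : X -> Prop) : Prop :=
  exists U : nat -> X -> Prop, (forall n, open T (U n)) /\
    forall x, A x <-> (forall n, U n x).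

Definition P_space : Prop :=
  forall U : nat -> X -> Prop, (forall n, open T (U n)) ->
    open T (fun x => forall n, U n x).

Definition countable_family (S : (X -> Prop) -> Prop) : Prop :=
  exists g : (X -> Prop) -> nat,
    forall A B, S A -> S B -> g A = g B -> A = B.

Definition weakly_Lindelof : Prop :=
  forall C : (X -> Prop) -> Prop,
    (forall U, C U -> open T U) -> (forall x, exists U, C U /\ U x) ->
    exists S : (X -> Prop) -> Prop,
      (forall U, S U -> C U) /\ countable_family S /\
      dense (fun x => exists U, S U /\ U x).

Definition compact (K : X -> Prop) : Prop :=
  forall C : (X -> Prop) -> Prop,
    (forall U, C U -> open T U) -> (forall x, K x -> exists U, C U /\ U x) ->
    exists l : list (X -> Prop), (forall U, In U l -> C U) /\
      forall x, K x -> exists U, In U l /\ U x.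

Definition G_K (U : (X -> Prop) -> Prop) : Prop :=
  (forall A, U A -> Gdelta A) /\
  ~ (exists A, U A /\ forall x, A x) /\
  (forall K, compact K -> exists A, U A /\ forall x, K x -> A x).

Definition G_D (U : (X -> Prop) -> Prop) : Prop :=
  (forall A, U A -> Gdelta A) /\ dense (fun x => exists A, U A /\ A x).

End Top.

Definition S1 (X : Type) (A B : ((X -> Prop) -> Prop) -> Prop) : Prop :=
  forall s : nat -> (X -> Prop) -> Prop, (forall n, A (s n)) ->
    exists b : nat -> X -> Prop, (forall n, s n (b n)) /\
      B (fun V => exists n, V = b n).

From Stdlib Require Import List ClassicalEpsilon FunctionalExtensionality PropExtensionality.
Set Implicit Arguments.

(* In a P-space every G_delta set is open.  Given a sequence
   (s n) of G_K families, each s n covers X, because singletons are compact.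
   For every point y pick V n y in s n containing y; the set
   W y = \bigcap_n V n y is a countable intersection of open sets, hence open,
   and the sets W y cover X.  Weak Lindelofness yields countably many W y_k
   with dense union.  Enumerating them along the injection witnessing
   countability, we select from s n the set V n y_n, which contains the n-th
   enumerated W y_n; the selected sets thus contain a dense union, so they
   form a member of G_D. *)

Section PSpaceSelection.
Variables (X : Type) (T : topology X).

Lemma set_ext (A B : X -> Prop) : (forall x, A x <-> B x) -> A = B.
Proof.
  intros HAB; apply functional_extensionality; intro x.
  apply propositional_extensionality; apply HAB.
Qed.

Lemma Gdelta_open (hP : P_space T) (A : X -> Prop) : Gdelta T A -> open T A.
Proof.
  intros [U [HU HA]].
  replace A with (fun x => forall n, U n x) by (apply set_ext; intro x; symmetry; apply HA).
  apply hP; exact HU.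
Qed.

Lemma singleton_compact (x : X) : compact T (fun y => y = x).
Proof.
  intros C _ HC.
  destruct (HC x eq_refl) as [U [HCU HUx]].
  exists (U :: nil); split.
  - intros V [<- | []]; exact HCU.
  - intros y ->; exists U; split; [left; reflexivity | exact HUx].
Qed.

Lemma G_K_cover (U : (X -> Prop) -> Prop) :
  G_K T U -> forall x, exists A, U A /\ A x.
Proof.
  intros [_ [_ HK]] x.
  destruct (HK _ (singleton_compact (x := x))) as [A [HA HAx]].
  exists A; split; [exact HA | apply HAx; reflexivity].
Qed.

Lemma dense_mono (D E : X -> Prop) :
  (forall x, D x -> E x) -> dense T D -> dense T E.
Proof.
  intros HDE HD O HO Hne.
  destruct (HD O HO Hne) as [x [HOx HDx]].
  exists x; split; [exact HOx | apply HDE, HDx].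
Qed.

Lemma countable_enumeration (S : (X -> Prop) -> Prop) :
  countable_family S -> exists h : nat -> X -> Prop, forall A, S A -> exists n, h n = A.
Proof.
  intros [g Hg].
  set (h := fun n => epsilon (inhabits (fun _ : X => True)) (fun A => S A /\ g A = n)).
  exists h; intros A HA; exists (g A).
  (* h (g A) is some member of S with the same code as A, hence A itself *)
  assert (Hspec : S (h (g A)) /\ g (h (g A)) = g A).
  { apply epsilon_spec; exists A; split; [exact HA | reflexivity]. }
  destruct Hspec as [HS Hcode]; apply Hg; assumption.
Qed.

Lemma pointwise_choice (s : nat -> (X -> Prop) -> Prop) :
  (forall n x, exists A, s n A /\ A x) ->
  exists V : nat -> X -> X -> Prop, forall n y, s n (V n y) /\ V n y y.
Proof.
  intros Hcov.
  exists (fun n y => epsilon (inhabits (fun _ : X => True)) (fun A => s n A /\ A y)).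
  intros n y; apply epsilon_spec, Hcov.
Qed.

Hypotheses (hP : P_space T) (hwL : weakly_Lindelof T) (hX : inhabited X).

Lemma dense_selection (s : nat -> (X -> Prop) -> Prop) :
  (forall n A, s n A -> Gdelta T A) ->
  (forall n x, exists A, s n A /\ A x) ->
  exists b : nat -> X -> Prop,
    (forall n, s n (b n)) /\ dense T (fun x => exists n, b n x).
Proof.
  intros HGd Hcov.
  destruct (pointwise_choice s Hcov) as [V HV].
  set (W := fun y x => forall n, V n y x).
  assert (HWopen : forall y, open T (W y)).
  { intro y; apply hP; intro n; apply (Gdelta_open hP), (HGd n), HV. }
  destruct (hwL (fun O => exists y, O = W y)) as [S [HSW [HScount HSdense]]].
  { intros O [y ->]; apply HWopen. }
  { intro x; exists (W x); split; [exists x; reflexivity | intro n; apply HV]. }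
  destruct (countable_enumeration HScount) as [h Hh].
  (* y n is a point whose W-set is the n-th enumerated set, when there is one *)
  set (y := fun n => epsilon hX (fun z => h n = W z)).
  exists (fun n => V n (y n)); split.
  - intro n; apply HV.
  - apply (dense_mono (D := fun x => exists A, S A /\ A x)); [| exact HSdense].
    intros x [A [HSA HAx]].
    destruct (Hh A HSA) as [n Hn].
    assert (Hyn : h n = W (y n)).
    { apply epsilon_spec. destruct (HSW A HSA) as [z Hz]. exists z; congruence. }
    exists n. rewrite Hn in Hyn. rewrite Hyn in HAx. apply HAx.
Qed.

End PSpaceSelection.

Lemma infinite_inhabited (X : Type) : infinite_space X -> inhabited X.
Proof.
  intros hinf; destruct (classic (inhabited X)) as [h | h]; [exact h |].
  exfalso; apply hinf; exists nil; intro x; apply h; constructor; exact x.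
Qed.

Theorem lemma5p27 (X : Type) (T : topology X)
  (hT1 : T1_space T) (hinf : infinite_space X)
  (hP : P_space T) (hwL : weakly_Lindelof T) :
  S1 (G_K T) (G_D T).
Proof.
  intros s hs.
  assert (HGd : forall n A, s n A -> Gdelta T A) by (intros n; apply (hs n)).
  assert (Hcov : forall n x, exists A, s n A /\ A x) by (intros n; apply (G_K_cover (T := T)), hs).
  destruct (dense_selection hP hwL (infinite_inhabited hinf) s HGd Hcov) as [b [Hbs Hbd]].
  exists b; split; [exact Hbs | split].
  - intros A [n ->]; exact (HGd n _ (Hbs n)).
  - apply (dense_mono (D := fun x => exists n, b n x)); [| exact Hbd].
    intros x [n Hbx]; exists (b n); split; [exists n; reflexivity | exact Hbx].
Qed.
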